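(* Let $\bar f$ be interval Riemann integrable on $[a,b]$ and define $\bar F:[a,b]\to\mathbb{R}_\mathcal{I}$ by $\bar F(t)=(IR)\int_a^t\bar f(s)\,ds$. Then $\bar F$ is continuous on $[a,b]$, and $\bar F'(x)=\bar f(x)$ at every point $x$ at which $\bar f$ is continuous.
   Context: An interval number is a closed interval $\bar a=[a_l,a_r]$ with $a_l<a_r$ real; $\mathbb{R}_\mathcal{I}$ is the set of interval numbers. Write $a_c=(a_l+a_r)/2$, $a_w=(a_r-a_l)/2>0$, $\bar a=\langle a_c;a_w\rangle=[a_c-a_w,a_c+a_w]$. Operations: $\bar a+\bar b=\langle a_c+b_c;a_wb_w\rangle$, $\bar a-\bar b=\langle a_c-b_c;a_w/b_w\rangle$, $k\bar a=\langle ka_c;a_w^k\rangle$ for real $k$; for real $h\ne0$, $\bar c/h=\langle c_c/h;c_w^{1/h}\rangle$. Distance $d(\bar a,\bar b)=\sqrt{(a_c-b_c)^2+(\ln a_w-\ln b_w)^2}$; continuity and limits w.r.t. $d$. Derivative: $\bar F'(x)=\lim_{h\to0}\frac{\bar F(x+h)-\bar F(x)}{h}$. Interval Riemann integral: $\bar A=(IR)\int_a^b\bar f$ if for every $\varepsilon>0$ there is $\delta>0$ such that for every partition $a=t_0<\dots<t_n=b$ with mesh $<\delta$ and tags $\xi_i\in[t_{i-1},t_i]$, $d(\sum_i(t_i-t_{i-1})\bar f(\xi_i),\bar A)<\varepsilon$. *)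

From Stdlib Require Import Reals Lra Lia ClassicalEpsilon.
Open Scope R_scope.

(* Interval number a = <a_c; a_w> = [a_c - a_w, a_c + a_w], a_w > 0. *)
Record Inum : Type := mkInum { ic : R; iw : R; iw_pos : 0 < iw }.

Lemma Rpower_pos' (x y : R) : 0 < Rpower x y.
Proof. unfold Rpower; apply exp_pos. Qed.

Definition iadd (a b : Inum) : Inum :=
  mkInum (ic a + ic b) (iw a * iw b) (Rmult_lt_0_compat _ _ (iw_pos a) (iw_pos b)).

Definition isub (a b : Inum) : Inum :=
  mkInum (ic a - ic b) (iw a / iw b) (Rdiv_lt_0_compat _ _ (iw_pos a) (iw_pos b)).

Definition iscal (k : R) (a : Inum) : Inum :=
  mkInum (k * ic a) (Rpower (iw a) k) (Rpower_pos' _ _).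

(* c / h = <c_c / h; c_w^(1/h)>   (used for h <> 0) *)
Definition idiv (c : Inum) (h : R) : Inum :=
  mkInum (ic c / h) (Rpower (iw c) (1 / h)) (Rpower_pos' _ _).

Definition izero : Inum := mkInum 0 1 Rlt_0_1.

Definition idist (a b : Inum) : R :=
  sqrt ((ic a - ic b) ^ 2 + (ln (iw a) - ln (iw b)) ^ 2).

(* Riemann sum  sum_{i=1}^n (t_i - t_{i-1}) f(xi_i), here indexed from 0:
   sum_{i<n} (t (i+1) - t i) f (xi i). *)
Fixpoint riemann_sum (f : R -> Inum) (t xi : nat -> R) (n : nat) : Inum :=
  match n with
  | O => izero
  | S m => iadd (riemann_sum f t xi m) (iscal (t (S m) - t m) (f (xi m)))
  end.

Definition is_IRint (f : R -> Inum) (a b : R) (A : Inum) : Prop :=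
  forall eps : R, 0 < eps ->
  exists delta : R, 0 < delta /\
  forall (n : nat) (t xi : nat -> R),
    t O = a -> t n = b ->
    (forall i : nat, (i < n)%nat -> t i < t (S i)) ->
    (forall i : nat, (i < n)%nat -> t (S i) - t i < delta) ->
    (forall i : nat, (i < n)%nat -> t i <= xi i <= t (S i)) ->
    idist (riemann_sum f t xi n) A < eps.

Definition IR_integrable (f : R -> Inum) (a b : R) : Prop :=
  exists A, is_IRint f a b A.

(* The integral as a total function (chosen value if integrable). *)
Definition IRint (f : R -> Inum) (a b : R) : Inum :=
  epsilon (inhabits izero) (fun A => is_IRint f a b A).

Definition icont_within (F : R -> Inum) (a b x : R) : Prop :=
  forall eps : R, 0 < eps -> exists delta : R, 0 < delta /\
    forall y : R, a <= y <= b -> Rabs (y - x) < delta -> idist (F y) (F x) < eps.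

Definition iderive_within (F : R -> Inum) (a b x : R) (L : Inum) : Prop :=
  forall eps : R, 0 < eps -> exists delta : R, 0 < delta /\
    forall h : R, h <> 0 -> Rabs h < delta -> a <= x + h <= b ->
      idist (idiv (isub (F (x + h)) (F x)) h) L < eps.

From Stdlib Require Import Reals Lra Lia ClassicalEpsilon.
Open Scope R_scope.

(* The map [A |-> (a_c, ln a_w)] is an isometry from (R_I, d) onto the
   Euclidean plane which turns the interval operations +, -, [k *] and [/ h]
   into the coordinatewise real ones.  Interval Riemann sums, integrals,
   continuity and difference quotients therefore split into the corresponding
   real notions for [ic o f] and [ln o iw o f], and the theorem reduces to the
   real one: the integral over [a, c] exists by the Cauchy criterion, and
   [F y - F x] is uniformly approximated by Riemann sums over [x, y], which
   gives continuity (with a single cell) and the derivative at points of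
   continuity of [f]. *)

Fixpoint rsum (g : R -> R) (t xi : nat -> R) (n : nat) : R :=
  match n with
  | O => 0
  | S m => rsum g t xi m + (t (S m) - t m) * g (xi m)
  end.

Definition fine_cell (d x y z : R) : Prop := x < y /\ y - x < d /\ x <= z <= y.

Definition fine_partition (a b d : R) (n : nat) (t xi : nat -> R) : Prop :=
  t O = a /\ t n = b /\ forall i, (i < n)%nat -> fine_cell d (t i) (t (S i)) (xi i).

Definition is_riemann_int (g : R -> R) (a b I : R) : Prop :=
  forall eps, 0 < eps -> exists d, 0 < d /\
  forall n t xi, fine_partition a b d n t xi -> Rabs (rsum g t xi n - I) < eps.

Definition rcont_within (F : R -> R) (a b x : R) : Prop :=
  forall eps, 0 < eps -> exists delta, 0 < delta /\
    forall y, a <= y <= b -> Rabs (y - x) < delta -> Rabs (F y - F x) < eps.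

Definition rderive_within (F : R -> R) (a b x l : R) : Prop :=
  forall eps, 0 < eps -> exists delta, 0 < delta /\
    forall h, h <> 0 -> Rabs h < delta -> a <= x + h <= b ->
      Rabs ((F (x + h) - F x) / h - l) < eps.

Lemma fine_partition_iff a b d n t xi :
  fine_partition a b d n t xi <->
  t O = a /\ t n = b /\ (forall i, (i < n)%nat -> t i < t (S i)) /\
  (forall i, (i < n)%nat -> t (S i) - t i < d) /\
  (forall i, (i < n)%nat -> t i <= xi i <= t (S i)).
Proof.
  split.
  - intros (Ha & Hb & Hc). split; [|split; [|split; [|split]]]; try assumption;
      intros i Hi; destruct (Hc i Hi) as (? & ? & ?); assumption.
  - intros (Ha & Hb & Hlt & Hd & Hxi). repeat split; auto; apply Hxi; assumption.
Qed.

Lemma fine_partition_mono a b d d' n t xi :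
  d <= d' -> fine_partition a b d n t xi -> fine_partition a b d' n t xi.
Proof.
  intros Hd (Ha & Hb & Hc). split; [|split]; try assumption.
  intros i Hi. destruct (Hc i Hi) as (? & ? & ?). repeat split; lra.
Qed.

Lemma fine_partition_le a b d n t xi :
  fine_partition a b d n t xi -> forall i j, (i <= j <= n)%nat -> t i <= t j.
Proof.
  intros (_ & _ & Hc) i j [Hij Hjn]. induction Hij as [|j Hij IH]; [lra|].
  destruct (Hc j ltac:(lia)) as (? & _). specialize (IH ltac:(lia)). lra.
Qed.

Lemma fine_partition_tag a b d n t xi :
  fine_partition a b d n t xi -> forall i, (i < n)%nat -> a <= xi i <= b.
Proof.
  intros P i Hi.
  pose proof (fine_partition_le _ _ _ _ _ _ P 0 i ltac:(lia)).
  pose proof (fine_partition_le _ _ _ _ _ _ P (S i) n ltac:(lia)).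
  destruct P as (<- & <- & Hc). destruct (Hc i Hi) as (_ & _ & ?). lra.
Qed.

Lemma fine_partition_point a d n t xi : fine_partition a a d n t xi -> n = 0%nat.
Proof.
  intros P. destruct n as [|n]; [reflexivity|].
  pose proof (fine_partition_le _ _ _ _ _ _ P 1 (S n) ltac:(lia)).
  destruct P as (H0 & Hn & Hc). destruct (Hc 0%nat ltac:(lia)) as (? & _). lra.
Qed.

Lemma fine_partition_cell d x y z :
  fine_cell d x y z ->
  fine_partition x y d 1 (fun i => match i with O => x | _ => y end) (fun _ => z).
Proof.
  intros Hc. split; [reflexivity | split; [reflexivity|]].
  intros i Hi. replace i with 0%nat by lia. exact Hc.
Qed.

Definition seq_cat (n1 : nat) (u1 u2 : nat -> R) (i : nat) : R :=
  if (i <? n1)%nat then u1 i else u2 (i - n1)%nat.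

Lemma seq_cat_l n1 u1 u2 i : (i < n1)%nat -> seq_cat n1 u1 u2 i = u1 i.
Proof. intros H. unfold seq_cat. destruct (Nat.ltb_spec i n1); [reflexivity | lia]. Qed.

Lemma seq_cat_r n1 u1 u2 i : (n1 <= i)%nat -> seq_cat n1 u1 u2 i = u2 (i - n1)%nat.
Proof. intros H. unfold seq_cat. destruct (Nat.ltb_spec i n1); [lia | reflexivity]. Qed.

Lemma seq_cat_le n1 u1 u2 i :
  u1 n1 = u2 O -> (i <= n1)%nat -> seq_cat n1 u1 u2 i = u1 i.
Proof.
  intros Hj H. destruct (Nat.eq_dec i n1) as [->|].
  - rewrite seq_cat_r, Nat.sub_diag by lia. congruence.
  - apply seq_cat_l. lia.
Qed.

Lemma rsum_ext g t t' xi xi' n :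
  (forall i, (i <= n)%nat -> t i = t' i) -> (forall i, (i < n)%nat -> xi i = xi' i) ->
  rsum g t xi n = rsum g t' xi' n.
Proof.
  induction n as [|n IH]; intros Ht Hxi; simpl; [reflexivity|].
  rewrite IH, !Ht, Hxi by (intros; auto with arith; lia). reflexivity.
Qed.

Lemma rsum_cat g n1 n2 t1 t2 x1 x2 :
  t1 n1 = t2 O ->
  rsum g (seq_cat n1 t1 t2) (seq_cat n1 x1 x2) (n1 + n2) =
  rsum g t1 x1 n1 + rsum g t2 x2 n2.
Proof.
  intros Hj. induction n2 as [|n2 IH].
  - rewrite Nat.add_0_r, Rplus_0_r. apply rsum_ext; intros i Hi.
    + apply seq_cat_le; assumption.
    + apply seq_cat_l; assumption.
  - rewrite Nat.add_succ_r. simpl. rewrite IH, !seq_cat_r by lia.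
    replace (S (n1 + n2) - n1)%nat with (S n2) by lia.
    replace (n1 + n2 - n1)%nat with n2 by lia. ring.
Qed.

Lemma fine_partition_cat a c e d n1 n2 t1 t2 x1 x2 :
  fine_partition a c d n1 t1 x1 -> fine_partition c e d n2 t2 x2 ->
  fine_partition a e d (n1 + n2) (seq_cat n1 t1 t2) (seq_cat n1 x1 x2).
Proof.
  intros (Ha & Hc1 & C1) (Hc2 & He & C2).
  assert (Hj : t1 n1 = t2 O) by congruence.
  split; [|split].
  - rewrite seq_cat_le by (assumption || lia). assumption.
  - rewrite seq_cat_r by lia. replace (n1 + n2 - n1)%nat with n2 by lia. assumption.
  - intros i Hi. destruct (Nat.lt_ge_cases i n1).
    + rewrite !seq_cat_le, seq_cat_l by (assumption || lia). apply C1. assumption.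
    + rewrite !seq_cat_r by lia. replace (S i - n1)%nat with (S (i - n1)) by lia.
      apply C2. lia.
Qed.

Definition uniform_grid (a c : R) (N i : nat) : R := a + INR i * ((c - a) / INR N).

Lemma uniform_grid_fine a c d :
  a < c -> 0 < d -> exists K, forall N, (K <= N)%nat ->
  fine_partition a c d N (uniform_grid a c N) (uniform_grid a c N).
Proof.
  intros Hac Hd. destruct (archimed_cor1 (d / (c - a))) as [K [HK HK0]].
  { apply Rdiv_lt_0_compat; lra. }
  exists K. intros N HN.
  assert (HKpos : 0 < INR K) by (apply lt_0_INR; lia).
  assert (HKN : INR K <= INR N) by (apply le_INR; lia).
  set (h := (c - a) / INR N).
  assert (Hh : 0 < h) by (apply Rdiv_lt_0_compat; lra).
  assert (Hhd : h < d).
  { apply Rle_lt_trans with ((c - a) * / INR K).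
    - apply Rmult_le_compat_l; [lra|]. apply Rinv_le_contravar; lra.
    - apply Rmult_lt_compat_l with (r := c - a) in HK; [|lra].
      replace ((c - a) * (d / (c - a))) with d in HK by (field; lra). exact HK. }
  repeat split; unfold uniform_grid; fold h; rewrite ?S_INR; try lra.
  - simpl. ring.
  - unfold h. field. apply not_0_INR. lia.
Qed.

Lemma fine_partition_exists a c d :
  a <= c -> 0 < d -> exists n t xi, fine_partition a c d n t xi.
Proof.
  intros Hac Hd. destruct (Req_dec a c) as [<-|Hne].
  - exists 0%nat, (fun _ => a), (fun _ => a). repeat split; intros; lia.
  - destruct (uniform_grid_fine a c d ltac:(lra) Hd) as [K HK].
    exists K, (uniform_grid a c K), (uniform_grid a c K). apply HK. lia.
Qed.

Lemma rsum_dev_const g n t xi K e :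
  (forall i, (i < n)%nat -> t i <= t (S i)) ->
  (forall i, (i < n)%nat -> Rabs (g (xi i) - K) <= e) ->
  Rabs (rsum g t xi n - (t n - t O) * K) <= e * (t n - t O).
Proof.
  induction n as [|n IH]; intros Ht Hg; simpl.
  - replace (0 - (t O - t O) * K) with 0 by ring. rewrite Rabs_R0. lra.
  - specialize (IH ltac:(auto) ltac:(auto)).
    specialize (Ht n ltac:(lia)). specialize (Hg n ltac:(lia)).
    assert (Hcell : Rabs ((t (S n) - t n) * (g (xi n) - K)) <= (t (S n) - t n) * e).
    { rewrite Rabs_mult, Rabs_pos_eq by lra. apply Rmult_le_compat_l; lra. }
    replace (rsum g t xi n + (t (S n) - t n) * g (xi n) - (t (S n) - t O) * K)
      with ((rsum g t xi n - (t n - t O) * K) + (t (S n) - t n) * (g (xi n) - K)) by ring.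
    pose proof (Rabs_triang (rsum g t xi n - (t n - t O) * K)
                            ((t (S n) - t n) * (g (xi n) - K))).
    lra.
Qed.

Lemma is_riemann_int_point g a : is_riemann_int g a a 0.
Proof.
  intros eps Heps. exists 1. split; [lra|]. intros n t xi P.
  rewrite (fine_partition_point _ _ _ _ _ P). simpl. rewrite Rminus_0_r, Rabs_R0. exact Heps.
Qed.

(* The integral is the limit of the uniform left-point sums. *)
Lemma is_riemann_int_cauchy g a c :
  a < c ->
  (forall eps, 0 < eps -> exists d, 0 < d /\ forall n1 t1 x1 n2 t2 x2,
     fine_partition a c d n1 t1 x1 -> fine_partition a c d n2 t2 x2 ->
     Rabs (rsum g t1 x1 n1 - rsum g t2 x2 n2) < eps) ->
  exists J, is_riemann_int g a c J.
Proof.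
  intros Hac Hcauchy.
  set (s N := rsum g (uniform_grid a c N) (uniform_grid a c N) N).
  assert (Hs : Cauchy_crit s).
  { intros eps Heps. destruct (Hcauchy eps Heps) as (d & Hd & Hclose).
    destruct (uniform_grid_fine a c d Hac Hd) as [K HK].
    exists K. intros N1 N2 HN1 HN2. apply Hclose; apply HK; lia. }
  destruct (R_complete s Hs) as [J HJ]. exists J.
  intros eps Heps. destruct (Hcauchy (eps / 2) ltac:(lra)) as (d & Hd & Hclose).
  exists d. split; [exact Hd|]. intros n t xi P.
  destruct (uniform_grid_fine a c d Hac Hd) as [K HK].
  destruct (HJ (eps / 2) ltac:(lra)) as [N0 HN0].
  specialize (HN0 (max K N0) ltac:(lia)). unfold R_dist in HN0.
  specialize (Hclose _ _ _ _ _ _ P (HK (max K N0) ltac:(lia))).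
  fold (s (max K N0)) in Hclose. split_Rabs; lra.
Qed.

Section Initial_segments.

Variables (g : R -> R) (a b I : R).
Hypothesis HI : is_riemann_int g a b I.

(* Two partitions of [a, c] are compared by completing both with one partition of [c, b]. *)
Lemma riemann_cauchy_initial eps :
  0 < eps -> exists d, 0 < d /\ forall c, a <= c <= b ->
  forall n1 t1 x1 n2 t2 x2,
    fine_partition a c d n1 t1 x1 -> fine_partition a c d n2 t2 x2 ->
    Rabs (rsum g t1 x1 n1 - rsum g t2 x2 n2) < eps.
Proof.
  intros Heps. destruct (HI (eps / 2) ltac:(lra)) as (d & Hd & Hsum).
  exists d. split; [exact Hd|]. intros c Hc n1 t1 x1 n2 t2 x2 P1 P2.
  destruct (fine_partition_exists c b d ltac:(lra) Hd) as (m & t3 & x3 & P3).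
  pose proof (Hsum _ _ _ (fine_partition_cat _ _ _ _ _ _ _ _ _ _ P1 P3)) as H1.
  pose proof (Hsum _ _ _ (fine_partition_cat _ _ _ _ _ _ _ _ _ _ P2 P3)) as H2.
  destruct P1 as (_ & E1 & _), P2 as (_ & E2 & _), P3 as (E3 & _).
  rewrite rsum_cat in H1, H2 by congruence.
  split_Rabs; lra.
Qed.

Lemma is_riemann_int_initial c : a <= c <= b -> exists J, is_riemann_int g a c J.
Proof.
  intros Hc. destruct (Req_dec a c) as [<-|Hne].
  - exists 0. apply is_riemann_int_point.
  - apply is_riemann_int_cauchy; [lra|]. intros eps Heps.
    destruct (riemann_cauchy_initial eps Heps) as (d & Hd & Hclose).
    exists d. split; [exact Hd|]. apply Hclose. exact Hc.
Qed.

Variable Phi : R -> R.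
Hypothesis HPhi : forall c, a <= c <= b -> is_riemann_int g a c (Phi c).

Lemma rsum_near_primitive eps :
  0 < eps -> exists d, 0 < d /\ forall c, a <= c <= b ->
  forall n t xi, fine_partition a c d n t xi -> Rabs (rsum g t xi n - Phi c) <= eps.
Proof.
  intros Heps. destruct (riemann_cauchy_initial eps Heps) as (d & Hd & Hclose).
  exists d. split; [exact Hd|]. intros c Hc n t xi P.
  apply Rle_plus_epsilon. intros eta Heta.
  destruct (HPhi c Hc eta Heta) as (d' & Hd' & Hsum).
  destruct (fine_partition_exists a c (Rmin d d') ltac:(lra) ltac:(now apply Rmin_glb_lt))
    as (n' & t' & xi' & P').
  specialize (Hsum _ _ _ (fine_partition_mono _ _ _ _ _ _ _ (Rmin_r _ _) P')).
  specialize (Hclose c Hc _ _ _ _ _ _ P (fine_partition_mono _ _ _ _ _ _ _ (Rmin_l _ _) P')).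
  split_Rabs; lra.
Qed.

Lemma primitive_increment eta :
  0 < eta -> exists d, 0 < d /\ forall x y, a <= x -> x <= y -> y <= b ->
  forall n t xi, fine_partition x y d n t xi -> Rabs (Phi y - Phi x - rsum g t xi n) <= eta.
Proof.
  intros Heta. destruct (rsum_near_primitive (eta / 2) ltac:(lra)) as (d & Hd & Hnear).
  exists d. split; [exact Hd|]. intros x y Hx Hxy Hy n t xi Q.
  destruct (fine_partition_exists a x d Hx Hd) as (m & t0 & x0 & P).
  pose proof (Hnear x ltac:(lra) _ _ _ P) as H1.
  pose proof (Hnear y ltac:(lra) _ _ _ (fine_partition_cat _ _ _ _ _ _ _ _ _ _ P Q)) as H2.
  destruct P as (_ & E1 & _), Q as (E2 & _).
  rewrite rsum_cat in H2 by congruence.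
  split_Rabs; lra.
Qed.

(* A single cell tagged at [x] shows that [Phi v - Phi u] is close to [(v - u) * g x]. *)
Lemma primitive_continuous x : a <= x <= b -> rcont_within Phi a b x.
Proof.
  intros Hx eps Heps. destruct (primitive_increment (eps / 2) ltac:(lra)) as (d & Hd & Hinc).
  set (M := Rabs (g x) + 1).
  assert (HM : 0 < M) by (pose proof (Rabs_pos (g x)); unfold M; lra).
  assert (Hcell : forall u v, a <= u -> u < v -> v <= b -> v - u < Rmin d (eps / (2 * M)) ->
            u <= x <= v -> Rabs (Phi v - Phi u) < eps).
  { intros u v Hu Huv Hv Hlen Hxuv.
    pose proof (Rmin_l d (eps / (2 * M))). pose proof (Rmin_r d (eps / (2 * M))).
    pose proof (Hinc u v Hu ltac:(lra) Hv _ _ _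
                  (fine_partition_cell d u v x ltac:(repeat split; lra))) as H1.
    simpl in H1.
    assert (H2 : Rabs ((v - u) * g x) < eps / 2).
    { rewrite Rabs_mult, Rabs_pos_eq by lra.
      apply Rle_lt_trans with ((v - u) * M); [apply Rmult_le_compat_l; unfold M; lra|].
      replace (eps / 2) with (eps / (2 * M) * M) by (field; lra).
      apply Rmult_lt_compat_r; lra. }
    split_Rabs; lra. }
  exists (Rmin d (eps / (2 * M))). split.
  { apply Rmin_glb_lt; [exact Hd|]. apply Rdiv_lt_0_compat; lra. }
  intros y Hy Hyx. destruct (Rtotal_order y x) as [Hlt | [-> | Hgt]].
  - rewrite Rabs_minus_sym. rewrite Rabs_left in Hyx by lra. apply Hcell; lra.
  - rewrite Rminus_diag, Rabs_R0. exact Heps.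
  - rewrite Rabs_right in Hyx by lra. apply Hcell; lra.
Qed.

Lemma primitive_increment_near_const x e d :
  (forall y, a <= y <= b -> Rabs (y - x) < d -> Rabs (g y - g x) <= e) ->
  forall u v, a <= u -> u <= v -> v <= b -> u <= x <= v -> v - u < d ->
  Rabs (Phi v - Phi u - (v - u) * g x) <= e * (v - u).
Proof.
  intros Hg u v Hu Huv Hv Hxuv Hlen. apply Rle_plus_epsilon. intros eta Heta.
  destruct (primitive_increment eta Heta) as (d' & Hd' & Hinc).
  destruct (fine_partition_exists u v d' Huv Hd') as (n & t & xi & Q).
  specialize (Hinc u v Hu Huv Hv _ _ _ Q).
  assert (Hdev : Rabs (rsum g t xi n - (t n - t O) * g x) <= e * (t n - t O)).
  { apply rsum_dev_const.
    - intros i Hi. destruct Q as (_ & _ & Hc). destruct (Hc i Hi) as (? & _). lra.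
    - intros i Hi. pose proof (fine_partition_tag _ _ _ _ _ _ Q i Hi).
      apply Hg; [lra|]. split_Rabs; lra. }
  destruct Q as (E0 & En & _). rewrite E0, En in Hdev. split_Rabs; lra.
Qed.

Lemma primitive_derivative x :
  a <= x <= b -> rcont_within g a b x -> rderive_within Phi a b x (g x).
Proof.
  intros Hx Hg eps Heps. destruct (Hg (eps / 2) ltac:(lra)) as (d & Hd & Hnear).
  exists d. split; [exact Hd|]. intros h Hh0 Hh Hxh.
  assert (Hbound : Rabs (Phi (x + h) - Phi x - h * g x) <= eps / 2 * Rabs h).
  { assert (Hnear' : forall y, a <= y <= b -> Rabs (y - x) < d -> Rabs (g y - g x) <= eps / 2)
      by (intros; apply Rlt_le, Hnear; assumption).
    destruct (Rle_lt_dec 0 h) as [Hpos | Hneg].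
    - rewrite (Rabs_pos_eq h) in Hh |- * by lra.
      pose proof (primitive_increment_near_const x _ d Hnear' x (x + h)) as H.
      replace (x + h - x) with h in H by ring. apply H; lra.
    - rewrite (Rabs_left h) in Hh |- * by lra.
      pose proof (primitive_increment_near_const x _ d Hnear' (x + h) x) as H.
      replace (x - (x + h)) with (- h) in H by ring.
      replace (Phi (x + h) - Phi x - h * g x) with (- (Phi x - Phi (x + h) - - h * g x)) by ring.
      rewrite Rabs_Ropp. apply H; lra. }
  assert (Habs : 0 < Rabs h) by (apply Rabs_pos_lt; exact Hh0).
  replace ((Phi (x + h) - Phi x) / h - g x) with ((Phi (x + h) - Phi x - h * g x) / h)
    by (field; exact Hh0).
  unfold Rdiv. rewrite Rabs_mult, Rabs_inv.
  apply Rle_lt_trans with (eps / 2); [|lra].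
  apply Rmult_le_reg_r with (Rabs h); [exact Habs|].
  rewrite Rmult_assoc, Rinv_l by lra. lra.
Qed.

End Initial_segments.

Definition ilw (A : Inum) : R := ln (iw A).

Lemma ic_riemann_sum f t xi n :
  ic (riemann_sum f t xi n) = rsum (fun s => ic (f s)) t xi n.
Proof. induction n as [|n IH]; simpl; [reflexivity|]. rewrite IH. reflexivity. Qed.

Lemma ilw_riemann_sum f t xi n :
  ilw (riemann_sum f t xi n) = rsum (fun s => ilw (f s)) t xi n.
Proof.
  unfold ilw. induction n as [|n IH]; simpl; [apply ln_1|].
  rewrite ln_mult by (apply iw_pos || apply Rpower_pos'). rewrite IH.
  unfold Rpower. rewrite ln_exp. ring.
Qed.

Lemma ilw_idiv_isub A B h : ilw (idiv (isub A B) h) = (ilw A - ilw B) / h.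
Proof.
  unfold ilw. simpl. unfold Rpower, Rdiv. rewrite ln_exp.
  rewrite ln_mult, ln_Rinv by (apply iw_pos || apply Rinv_0_lt_compat, iw_pos). ring.
Qed.

Lemma Rabs_le_sqrt_sum_sqr x y : Rabs x <= sqrt (x ^ 2 + y ^ 2).
Proof.
  rewrite <- sqrt_Rsqr_abs. apply sqrt_le_1_alt.
  unfold Rsqr. pose proof (pow2_ge_0 y). simpl. lra.
Qed.

Lemma sqrt_sum_sqr_le x y : sqrt (x ^ 2 + y ^ 2) <= Rabs x + Rabs y.
Proof.
  pose proof (Rabs_pos x). pose proof (Rabs_pos y).
  rewrite <- (sqrt_pow2 (Rabs x + Rabs y)) by lra. apply sqrt_le_1_alt.
  rewrite <- (pow2_abs x), <- (pow2_abs y). nra.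
Qed.

Lemma idist_ge_ic A B : Rabs (ic A - ic B) <= idist A B.
Proof. apply Rabs_le_sqrt_sum_sqr. Qed.

Lemma idist_ge_ilw A B : Rabs (ilw A - ilw B) <= idist A B.
Proof. unfold idist. rewrite Rplus_comm. apply Rabs_le_sqrt_sum_sqr. Qed.

Lemma idist_le A B : idist A B <= Rabs (ic A - ic B) + Rabs (ilw A - ilw B).
Proof. apply sqrt_sum_sqr_le. Qed.

Lemma is_IRint_components f a b A :
  is_IRint f a b A <->
  is_riemann_int (fun s => ic (f s)) a b (ic A) /\
  is_riemann_int (fun s => ilw (f s)) a b (ilw A).
Proof.
  split.
  - intros HA. split; intros eps Heps; destruct (HA eps Heps) as (d & Hd & Hsum);
      exists d; split; try exact Hd; intros n t xi P;
      apply fine_partition_iff in P as (P1 & P2 & P3 & P4 & P5);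
      specialize (Hsum n t xi P1 P2 P3 P4 P5).
    + rewrite <- ic_riemann_sum. eapply Rle_lt_trans; [apply idist_ge_ic | exact Hsum].
    + rewrite <- ilw_riemann_sum. eapply Rle_lt_trans; [apply idist_ge_ilw | exact Hsum].
  - intros [Hc Hl] eps Heps.
    destruct (Hc (eps / 2) ltac:(lra)) as (d1 & Hd1 & H1).
    destruct (Hl (eps / 2) ltac:(lra)) as (d2 & Hd2 & H2).
    exists (Rmin d1 d2). split; [now apply Rmin_glb_lt|].
    intros n t xi P1 P2 P3 P4 P5.
    assert (P : fine_partition a b (Rmin d1 d2) n t xi)
      by (apply fine_partition_iff; repeat split; auto; apply P5; assumption).
    specialize (H1 n t xi (fine_partition_mono _ _ _ _ _ _ _ (Rmin_l _ _) P)).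
    specialize (H2 n t xi (fine_partition_mono _ _ _ _ _ _ _ (Rmin_r _ _) P)).
    rewrite <- ic_riemann_sum in H1. rewrite <- ilw_riemann_sum in H2.
    pose proof (idist_le (riemann_sum f t xi n) A). lra.
Qed.

Lemma icont_within_components F a b x :
  icont_within F a b x <->
  rcont_within (fun t => ic (F t)) a b x /\ rcont_within (fun t => ilw (F t)) a b x.
Proof.
  split.
  - intros HF. split; intros eps Heps; destruct (HF eps Heps) as (d & Hd & Hnear);
      exists d; split; try exact Hd; intros y Hy Hyx.
    + eapply Rle_lt_trans; [apply idist_ge_ic | exact (Hnear y Hy Hyx)].
    + eapply Rle_lt_trans; [apply idist_ge_ilw | exact (Hnear y Hy Hyx)].
  - intros [Hc Hl] eps Heps.
    destruct (Hc (eps / 2) ltac:(lra)) as (d1 & Hd1 & H1).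
    destruct (Hl (eps / 2) ltac:(lra)) as (d2 & Hd2 & H2).
    exists (Rmin d1 d2). split; [now apply Rmin_glb_lt|]. intros y Hy Hyx.
    specialize (H1 y Hy (Rlt_le_trans _ _ _ Hyx (Rmin_l _ _))).
    specialize (H2 y Hy (Rlt_le_trans _ _ _ Hyx (Rmin_r _ _))).
    pose proof (idist_le (F y) (F x)). lra.
Qed.

Lemma iderive_within_components F a b x L :
  rderive_within (fun t => ic (F t)) a b x (ic L) ->
  rderive_within (fun t => ilw (F t)) a b x (ilw L) ->
  iderive_within F a b x L.
Proof.
  intros Hc Hl eps Heps.
  destruct (Hc (eps / 2) ltac:(lra)) as (d1 & Hd1 & H1).
  destruct (Hl (eps / 2) ltac:(lra)) as (d2 & Hd2 & H2).
  exists (Rmin d1 d2). split; [now apply Rmin_glb_lt|]. intros h Hh0 Hh Hxh.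
  specialize (H1 h Hh0 (Rlt_le_trans _ _ _ Hh (Rmin_l _ _)) Hxh).
  specialize (H2 h Hh0 (Rlt_le_trans _ _ _ Hh (Rmin_r _ _)) Hxh).
  rewrite <- ilw_idiv_isub in H2.
  pose proof (idist_le (idiv (isub (F (x + h)) (F x)) h) L). simpl in *. lra.
Qed.

Lemma IRint_spec f a b c :
  IR_integrable f a b -> a <= c <= b -> is_IRint f a c (IRint f a c).
Proof.
  intros [A HA] Hc. apply is_IRint_components in HA as [HIc HIl].
  destruct (is_riemann_int_initial _ _ _ _ HIc c Hc) as [J1 HJ1].
  destruct (is_riemann_int_initial _ _ _ _ HIl c Hc) as [J2 HJ2].
  apply (epsilon_spec (inhabits izero) (fun A => is_IRint f a c A)).
  exists (mkInum J1 (exp J2) (exp_pos J2)). apply is_IRint_components.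
  unfold ilw. simpl. rewrite ln_exp. split; assumption.
Qed.

Theorem theorem5p6 (f : R -> Inum) (a b : R) :
  a < b ->
  IR_integrable f a b ->
  (forall x : R, a <= x <= b -> icont_within (fun t => IRint f a t) a b x) /\
  (forall x : R, a <= x <= b -> icont_within f a b x ->
     iderive_within (fun t => IRint f a t) a b x (f x)).
Proof.
  intros _ Hint.
  assert (HPhi : forall c, a <= c <= b ->
            is_riemann_int (fun s => ic (f s)) a c (ic (IRint f a c)) /\
            is_riemann_int (fun s => ilw (f s)) a c (ilw (IRint f a c)))
    by (intros c Hc; apply is_IRint_components, (IRint_spec f a b c Hint Hc)).
  destruct Hint as [A HA]. apply is_IRint_components in HA as [HIc HIl].
  split.
  - intros x Hx. apply icont_within_components. split.
    + exact (primitive_continuous _ _ _ _ HIc _ (fun c Hc => proj1 (HPhi c Hc)) x Hx).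
    + exact (primitive_continuous _ _ _ _ HIl _ (fun c Hc => proj2 (HPhi c Hc)) x Hx).
  - intros x Hx Hfx. apply icont_within_components in Hfx as [Hfc Hfl].
    apply iderive_within_components.
    + exact (primitive_derivative _ _ _ _ HIc _ (fun c Hc => proj1 (HPhi c Hc)) x Hx Hfc).
    + exact (primitive_derivative _ _ _ _ HIl _ (fun c Hc => proj2 (HPhi c Hc)) x Hx Hfl).
Qed.
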